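(* Fix an integer $r\geq 3$, and let $G$ be a balanced $r$-partite graph on $rn$ vertices with $\delta^*(G)>\left(1-\frac{1}{r-1}\right)n$. Then for any vertices $u,v\in V(G)$ there exist copies $K$ and $K'$ of $K_r$ in $G$ such that $u\in V(K)$, $v\in V(K')$, and $K$ and $K'$ have at least one vertex in common.
   Context: For an $r$-partite graph $G$ with vertex classes $V_1,\dots,V_r$, $G$ is balanced if all classes have the same size, and $\delta^*(G)$ is the largest integer $m$ such that for all $i\neq j$ every vertex of $V_i$ has at least $m$ neighbours in $V_j$. *)

From HB Require Import structures.
From mathcomp Require Import all_boot all_order all_algebra.
Set Implicit Arguments. Unset Strict Implicit. Unset Printing Implicit Defensive.
Import Order.TTheory GRing.Theory Num.Theory.

Definition simple_graph (T : finType) (e : rel T) : Prop :=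
  symmetric e /\ irreflexive e.

Definition r_partite (T : finType) (r : nat) (e : rel T) (c : T -> 'I_r) : Prop :=
  forall x y, e x y -> c x != c y.

Definition balanced (T : finType) (r n : nat) (c : T -> 'I_r) : Prop :=
  forall i : 'I_r, #|[set x | c x == i]| = n.

Definition deg_in (T : finType) (r : nat) (e : rel T) (c : T -> 'I_r)
  (x : T) (j : 'I_r) : nat :=
  #|[set y | e x y & c y == j]|.

(* delta^*(G) > t  :  for all i <> j, every vertex of V_i has more than t
   neighbours in V_j  (t a rational threshold). *)
Definition delta_star_gt (T : finType) (r : nat) (e : rel T) (c : T -> 'I_r)
  (t : rat) : Prop :=
  forall x : T, forall j : 'I_r, c x != j -> (t < (deg_in e c x j)%:R)%R.

Definition is_Kr (T : finType) (r : nat) (e : rel T) (K : {set T}) : Prop :=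
  #|K| = r /\ {in K &, forall x y, x != y -> e x y}.

From HB Require Import structures.
From mathcomp Require Import all_boot all_order all_algebra.
From mathcomp Require Import ring lra zify.
Import Order.TTheory GRing.Theory Num.Theory.
Set Implicit Arguments. Unset Strict Implicit. Unset Printing Implicit Defensive.

(* Every vertex misses fewer than n/(r-1) vertices of any other class, so any
   r-1 vertices outside a class V_j have a common neighbour in V_j (union
   bound).  Hence a clique with fewer than r vertices, which meets fewer than
   r classes, extends by a common neighbour in a missing class, and greedily
   to a copy of K_r.  For u, v pick a class other than those of u and v and a
   common neighbour w of u and v in it; extending the edges uw and vw gives
   two copies of K_r sharing w. *)

Lemma threshold_mul_lt (m n d : nat) : 0 < m -> d <= n ->
  ((1 - 1 / m%:R) * n%:R < d%:R :> rat)%R -> (n - d) * m < n.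
Proof.
move=> m_gt0 le_dn lt_td.
rewrite -(ltr_nat rat) natrM natrB //.
have m_pos : (0 < m%:R :> rat)%R by rewrite ltr0n.
have : (m%:R * ((1 - 1 / m%:R) * n%:R) = m%:R * n%:R - n%:R :> rat)%R.
  by field; rewrite lt0r_neq0.
rewrite -(ltr_pM2l m_pos) in lt_td; nra.
Qed.

Lemma card_bigcup_le (T I : finType) (P : {pred I}) (F : I -> {set T}) :
  #|\bigcup_(i in P) F i| <= \sum_(i in P) #|F i|.
Proof.
elim/big_ind2: _ => [|m A n B leA leB|]; rewrite ?cards0 //.
exact: leq_trans (leq_card_setU A B).1 (leq_add leA leB).
Qed.

Lemma exists_notin_card_lt (T : finType) (A : {set T}) :
  #|A| < #|T| -> exists x, x \notin A.
Proof.
move=> ltAT; have /set0Pn [x] : ~: A != set0.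
  by rewrite -card_gt0 cardsCs setCK; lia.
by rewrite inE; exists x.
Qed.

Definition clique (T : finType) (e : rel T) (K : {set T}) :=
  {in K &, forall x y, x != y -> e x y}.

Section MultipartiteCliques.

Variables (T : finType) (r n : nat) (e : rel T) (c : T -> 'I_r).
Hypothesis e_simple : simple_graph e.
Hypothesis c_balanced : balanced n c.
Hypothesis e_dense : delta_star_gt e c ((1 - 1 / (r.-1)%:R) * n%:R)%R.
Hypothesis r_gt1 : 1 < r.
Hypothesis n_gt0 : 0 < n.

Definition non_nbrs (x : T) (j : 'I_r) := [set y | c y == j & ~~ e x y].

Lemma non_nbrs_mul_lt x j : c x != j -> #|non_nbrs x j| * r.-1 < n.
Proof.
move=> cxj; have := cardsID [set y | e x y] [set y | c y == j].
have -> : [set y | c y == j] :&: [set y | e x y] = [set y | e x y & c y == j].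
  by apply/setP => y; rewrite !inE andbC.
have -> : [set y | c y == j] :\: [set y | e x y] = non_nbrs x j.
  by apply/setP => y; rewrite !inE andbC.
rewrite c_balanced => card_class.
have := threshold_mul_lt _ _ (e_dense cxj); rewrite /deg_in -card_class addKn.
by apply; [lia | exact: leq_addr].
Qed.

Lemma common_nbr (S : {set T}) j : #|S| <= r.-1 -> {in S, forall x, c x != j} ->
  exists y, c y = j /\ {in S, forall x, e x y}.
Proof.
move=> le_S_r S_off_j; set U := \bigcup_(x in S) non_nbrs x j.
have ltU : #|U| < n.
  have : #|U| * r.-1 <= r.-1 * n.-1.
    apply: leq_trans (leq_mul (card_bigcup_le _ _) (leqnn _)) _.
    rewrite big_distrl /=; apply: leq_trans (leq_mul le_S_r (leqnn n.-1)).
    rewrite -sum_nat_const; apply: leq_sum => x xS.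
    by have := non_nbrs_mul_lt (S_off_j x xS); lia.
  nia.
have : ~~ ([set y | c y == j] \subset U).
  by apply/negP => /subset_leq_card; rewrite c_balanced; lia.
case/subsetPn => y; rewrite inE => /eqP cyj yU; exists y; split=> // x xS.
apply: contraNT yU => nexy; apply/bigcupP; exists x => //.
by rewrite inE cyj eqxx.
Qed.

Lemma clique_setU1 (K : {set T}) y :
  clique e K -> {in K, forall x, e x y} -> clique e (y |: K).
Proof.
have [e_sym _] := e_simple.
move=> K_clique K_y a b /setU1P [-> | aK] /setU1P [-> | bK]; rewrite ?eqxx //.
- by rewrite e_sym => _; exact: K_y.
- by move=> _; exact: K_y.
- exact: K_clique.
Qed.

Lemma clique_pair x y : e x y -> clique e [set x; y].
Proof.
have [e_sym _] := e_simple.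
move=> exy; apply: clique_setU1 => [a b /set1P -> /set1P ->|z /set1P ->].
  by rewrite eqxx.
by rewrite e_sym.
Qed.

Lemma clique_extend (K : {set T}) : clique e K -> #|K| < r ->
  exists2 y, y \notin K & clique e (y |: K).
Proof.
move=> K_clique ltKr.
have [j jK] : exists j, j \notin c @: K.
  apply: exists_notin_card_lt.
  by rewrite card_ord (leq_ltn_trans (leq_imset_card _ _)).
have [|x xK|y [cyj K_y]] := common_nbr (S := K) (j := j); first by lia.
  by apply: contraNneq jK => <-; exact: imset_f.
exists y; last exact: clique_setU1.
by apply: contra jK => yK; rewrite -cyj imset_f.
Qed.

Lemma clique_sub_Kr (K : {set T}) : clique e K -> #|K| <= r ->
  exists2 K', is_Kr r e K' & K \subset K'.
Proof.
move=> K_clique leKr; move: {2}(r - #|K|) (erefl (r - #|K|)) => k.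
elim: k K K_clique leKr => [|k IHk] K K_clique leKr gap.
  by exists K; first by split; first by lia.
have [|y yK yK_clique] := clique_extend K_clique; first by lia.
have [|| K' K'_Kr sub] := IHk (y |: K) yK_clique; rewrite ?cardsU1 ?yK; try lia.
by exists K' => //; exact: subset_trans (subsetUr _ _) sub.
Qed.

End MultipartiteCliques.

Theorem proposition2p4 (r n : nat) (T : finType) (e : rel T) (c : T -> 'I_r) :
  3 <= r ->
  simple_graph e ->
  r_partite e c ->
  balanced n c ->
  delta_star_gt e c ((1 - 1 / (r.-1)%:R) * n%:R)%R ->
  forall u v : T,
    exists K K' : {set T},
      [/\ is_Kr r e K, is_Kr r e K', u \in K, v \in K' & K :&: K' != set0].
Proof.
move=> r_ge3 e_simple _ c_balanced e_dense u v.
have r_gt1 : 1 < r by lia.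
have n_gt0 : 0 < n.
  by rewrite -(c_balanced (c u)) card_gt0; apply/set0Pn; exists u; rewrite inE.
have [j juv] : exists j, j \notin [set c u; c v].
  by apply: exists_notin_card_lt; rewrite card_ord cards2; case: (_ != _); lia.
have [|x|w [_ uv_w]] :=
  common_nbr c_balanced e_dense r_gt1 n_gt0 (S := [set u; v]) (j := j).
- by rewrite cards2; case: (_ != _); lia.
- by move=> /set2P [] ->; apply: contraNneq juv => <-; rewrite !inE eqxx ?orbT.
have Kr_through x : x \in [set u; v] -> exists2 K, is_Kr r e K & [set x; w] \subset K.
  move=> xuv; apply: clique_sub_Kr => //; first exact/clique_pair/uv_w.
  by rewrite cards2; case: (_ != _); lia.
have [K K_Kr /subsetP uwK] := Kr_through u (set21 u v).
have [K' K'_Kr /subsetP vwK'] := Kr_through v (set22 u v).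
exists K, K'; split; rewrite ?uwK ?vwK' ?set21 //.
by apply/set0Pn; exists w; rewrite inE uwK ?vwK' ?set22.
Qed.
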